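(* Let $R_1,R_2$ be commutative rings with nonzero identity, $I_1$ an ideal of $R_1$, $I_2$ an ideal of $R_2$, $R=R_1\times R_2$ and $I=I_1\times I_2$. Then (a) $\omega(\Gamma''_I(R))\geq\max\{\omega(\Gamma''_{I_1}(R_1)),\omega(\Gamma''_{I_2}(R_2))\}$; (b) $\chi(\Gamma''_I(R))\geq\max\{\chi(\Gamma''_{I_1}(R_1)),\chi(\Gamma''_{I_2}(R_2))\}$.
   Context: $R_1\times R_2$ has componentwise operations. For a commutative ring $S$ and an ideal $J$ of $S$, $\Gamma''_J(S)$ is the simple undirected graph whose vertex set is $\{x\in S\setminus J : xS+J\neq S\}$, with distinct vertices $x,y$ adjacent if and only if $x\notin yS+J$ and $y\notin xS+J$. $\omega(G)$ is the clique number of $G$ (the number of vertices in a largest complete subgraph) and $\chi(G)$ is the chromatic number of $G$ (the minimal number of colors in a coloring of the vertices in which adjacent vertices get different colors). *)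

From HB Require Import structures.
From mathcomp Require Import all_boot all_order all_algebra.
From Stdlib Require Import ClassicalEpsilon.
Set Implicit Arguments. Unset Strict Implicit. Unset Printing Implicit Defensive.
Import GRing.Theory.
Local Open Scope ring_scope.

Definition is_ideal (S : comNzRingType) (J : S -> Prop) : Prop :=
  [/\ J 0,
      (forall x y, J x -> J y -> J (x + y)) &
      (forall r x, J x -> J (r * x))].

Definition in_xSJ (S : comNzRingType) (J : S -> Prop) (x y : S) : Prop :=
  exists s j, J j /\ y = x * s + j.

(* vertex set of Gamma''_J(S): x \notin J and xS + J <> S *)
Definition GammaV (S : comNzRingType) (J : S -> Prop) (x : S) : Prop :=
  ~ J x /\ ~ (forall y, in_xSJ J x y).

Definition GammaVtx (S : comNzRingType) (J : S -> Prop) : Type :=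
  { x : S | GammaV J x }.

Definition GammaAdj (S : comNzRingType) (J : S -> Prop)
  (u v : GammaVtx J) : Prop :=
  proj1_sig u <> proj1_sig v /\
  ~ in_xSJ J (proj1_sig v) (proj1_sig u) /\
  ~ in_xSJ J (proj1_sig u) (proj1_sig v).

Inductive enat : Type := Fin of nat | Inf.

Definition ele (a b : enat) : Prop :=
  match a, b with
  | _, Inf => True
  | Inf, Fin _ => False
  | Fin m, Fin n => (m <= n)%N
  end.

Definition emax (a b : enat) : enat :=
  match a, b with
  | Fin m, Fin n => Fin (maxn m n)
  | _, _ => Inf
  end.

Definition has_clique (V : Type) (adj : V -> V -> Prop) (n : nat) : Prop :=
  exists f : 'I_n -> V, injective f /\ (forall i j, i <> j -> adj (f i) (f j)).

Definition colorable (V : Type) (adj : V -> V -> Prop) (k : nat) : Prop :=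
  exists c : V -> 'I_k, forall x y, adj x y -> c x <> c y.

(* clique number: the largest size of a complete subgraph, or Inf if
   there are complete subgraphs of every finite size *)
Definition clique_number (V : Type) (adj : V -> V -> Prop) : enat :=
  match excluded_middle_informative
          (exists n, has_clique adj n /\ ~ has_clique adj n.+1) with
  | left H => Fin (proj1_sig (constructive_indefinite_description _ H))
  | right _ => Inf
  end.

(* chromatic number: least number of colours of a proper colouring,
   or Inf if no finite proper colouring exists *)
Definition chromatic_number (V : Type) (adj : V -> V -> Prop) : enat :=
  match excluded_middle_informative
          (exists n, colorable adj n /\ forall m, colorable adj m -> (n <= m)%N) with
  | left H => Fin (proj1_sig (constructive_indefinite_description _ H))
  | right _ => Inf
  end.

Definition prod_ideal (R1 R2 : comNzRingType) (I1 : R1 -> Prop) (I2 : R2 -> Prop)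
  : (R1 * R2)%type -> Prop := fun p => I1 p.1 /\ I2 p.2.

(* The maps x |-> (x, 0) and x |-> (0, x) are graph homomorphisms from
   Gamma''_{I1}(R1) and Gamma''_{I2}(R2) into Gamma''_{I1 x I2}(R1 x R2),
   because membership in (x, x')R + I projects to membership in xR1 + I1 and
   x'R2 + I2.  Along a homomorphism into a loopless graph, neither the clique
   number nor the chromatic number can decrease.  No ideal axiom is needed. *)
From mathcomp Require Import all_boot all_order all_algebra.
From Stdlib Require Import Classical ClassicalEpsilon.
Set Implicit Arguments. Unset Strict Implicit. Unset Printing Implicit Defensive.
Local Open Scope ring_scope.

Lemma emax_ele a b c : ele a c -> ele b c -> ele (emax a b) c.
Proof.
case: a => [m|]; case: b => [n|]; case: c => [k|] //= le_mk le_nk.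
by rewrite geq_max le_mk le_nk.
Qed.

Lemma classical_ex_minn (P : nat -> Prop) m :
  P m -> exists n, P n /\ forall k, P k -> (n <= k)%N.
Proof.
elim/ltn_ind: m => m IHm Pm.
case: (classic (exists2 k, (k < m)%N & P k)) => [[k lt_km Pk]|no_smaller].
  exact: (IHm k).
exists m; split => // k Pk; rewrite leqNgt; apply/negP => lt_km.
by apply: no_smaller; exists k.
Qed.

Lemma has_clique_leq (V : Type) (adjV : V -> V -> Prop) n m :
  (n <= m)%N -> has_clique adjV m -> has_clique adjV n.
Proof.
move=> le_nm [f [f_inj f_adj]]; exists (f \o widen_ord le_nm); split.
  by move=> i j /f_inj /(congr1 val) /= /val_inj.
by move=> i j ne_ij; apply: f_adj => /(congr1 val) /= /val_inj.
Qed.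

Lemma has_clique0 (V : Type) (adjV : V -> V -> Prop) : has_clique adjV 0.
Proof. by exists (fun i : 'I_0 => False_rect _ (notF (ltn_ord i))); split; case. Qed.

Section CliqueChromatic.
Variables (V W : Type) (adjV : V -> V -> Prop) (adjW : W -> W -> Prop).

Lemma clique_number_le :
  (forall n, has_clique adjV n -> has_clique adjW n) ->
  ele (clique_number adjV) (clique_number adjW).
Proof.
move=> cliqueVW; rewrite /clique_number.
case: (excluded_middle_informative
        (exists n, has_clique adjW n /\ ~ has_clique adjW n.+1)) => [HW|];
  last by case: excluded_middle_informative.
case: (constructive_indefinite_description _ HW) => m [_ no_clique_m1] /=.
have bounded n : has_clique adjW n -> (n <= m)%N.
  move=> clique_n; rewrite leqNgt; apply/negP => lt_mn.
  by apply/no_clique_m1/(has_clique_leq lt_mn).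
case: excluded_middle_informative => [HV|HV].
  case: (constructive_indefinite_description _ HV) => n [clique_n _] /=.
  exact/bounded/cliqueVW.
have all_cliques n : has_clique adjV n.
  elim: n => [|n IHn]; first exact: has_clique0.
  by apply: NNPP => no_clique; apply: HV; exists n.
by have := bounded _ (cliqueVW _ (all_cliques m.+1)); rewrite ltnn.
Qed.

Lemma chromatic_number_le :
  (forall k, colorable adjW k -> colorable adjV k) ->
  ele (chromatic_number adjV) (chromatic_number adjW).
Proof.
move=> colorableWV; rewrite /chromatic_number.
case: (excluded_middle_informative (exists n, colorable adjW n /\
        forall m, colorable adjW m -> (n <= m)%N)) => [HW|];
  last by case: excluded_middle_informative.
case: (constructive_indefinite_description _ HW) => m [colorable_m _] /=.
case: excluded_middle_informative => [HV|HV].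
  case: (constructive_indefinite_description _ HV) => n [_ min_n] /=.
  exact/min_n/colorableWV.
by case: HV; apply: (classical_ex_minn (colorableWV _ colorable_m)).
Qed.

Variable f : V -> W.
Hypothesis f_hom : forall u v, adjV u v -> adjW (f u) (f v).

Lemma has_clique_hom n :
  (forall w, ~ adjW w w) -> has_clique adjV n -> has_clique adjW n.
Proof.
move=> adjW_irr [g [_ g_adj]]; exists (f \o g); split => [i j /= eq_fg|i j ne_ij].
  apply: NNPP => ne_ij; have := f_hom (g_adj _ _ ne_ij).
  by rewrite eq_fg; apply: adjW_irr.
exact/f_hom/g_adj.
Qed.

Lemma colorable_hom k : colorable adjW k -> colorable adjV k.
Proof. by case=> c c_proper; exists (c \o f) => u v /f_hom /c_proper. Qed.

End CliqueChromatic.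

Lemma GammaAdj_irr (S : comNzRingType) (J : S -> Prop) (w : GammaVtx J) :
  ~ GammaAdj w w.
Proof. by case. Qed.

Section ProductEmbeddings.
Variables (R1 R2 : comNzRingType) (I1 : R1 -> Prop) (I2 : R2 -> Prop).
Local Notation I := (prod_ideal I1 I2).

Lemma in_xSJ_fst (x y : R1 * R2) : in_xSJ I x y -> in_xSJ I1 x.1 y.1.
Proof. by case=> s [j [[I1j _] ->]]; exists s.1, j.1. Qed.

Lemma in_xSJ_snd (x y : R1 * R2) : in_xSJ I x y -> in_xSJ I2 x.2 y.2.
Proof. by case=> s [j [[_ I2j] ->]]; exists s.2, j.2. Qed.

Lemma GammaV_pairl x : GammaV I1 x -> GammaV I (x, 0).
Proof.
case=> notI1x not_comax; split=> [[]//|comax]; apply: not_comax => y.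
exact: (in_xSJ_fst (comax (y, 0))).
Qed.

Lemma GammaV_pairr x : GammaV I2 x -> GammaV I (0, x).
Proof.
case=> notI2x not_comax; split=> [[]//|comax]; apply: not_comax => y.
exact: (in_xSJ_snd (comax (0, y))).
Qed.

Definition pairl_vertex (u : GammaVtx I1) : GammaVtx I :=
  exist _ (sval u, 0) (GammaV_pairl (svalP u)).

Definition pairr_vertex (u : GammaVtx I2) : GammaVtx I :=
  exist _ (0, sval u) (GammaV_pairr (svalP u)).

Lemma GammaAdj_pairl u v :
  GammaAdj u v -> GammaAdj (pairl_vertex u) (pairl_vertex v).
Proof.
case=> ne_uv [not_vu not_uv]; split; first by case.
by split=> /in_xSJ_fst.
Qed.

Lemma GammaAdj_pairr u v :
  GammaAdj u v -> GammaAdj (pairr_vertex u) (pairr_vertex v).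
Proof.
case=> ne_uv [not_vu not_uv]; split; first by case.
by split=> /in_xSJ_snd.
Qed.

End ProductEmbeddings.

Theorem corollary2p5 (R1 R2 : comNzRingType) (I1 : R1 -> Prop) (I2 : R2 -> Prop) :
  is_ideal I1 -> is_ideal I2 ->
  ele (emax (clique_number (@GammaAdj R1 I1)) (clique_number (@GammaAdj R2 I2)))
      (clique_number (@GammaAdj (R1 * R2)%type (prod_ideal I1 I2))) /\
  ele (emax (chromatic_number (@GammaAdj R1 I1)) (chromatic_number (@GammaAdj R2 I2)))
      (chromatic_number (@GammaAdj (R1 * R2)%type (prod_ideal I1 I2))).
Proof.
move=> _ _; have adjl := @GammaAdj_pairl R1 R2 I1 I2.
have adjr := @GammaAdj_pairr R1 R2 I1 I2.
split; apply: emax_ele.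
- by apply: clique_number_le => n; apply: (has_clique_hom adjl); apply: GammaAdj_irr.
- by apply: clique_number_le => n; apply: (has_clique_hom adjr); apply: GammaAdj_irr.
- exact/chromatic_number_le/(colorable_hom adjl).
- exact/chromatic_number_le/(colorable_hom adjr).
Qed.
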